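(* Let $k:\mathbb{R}\to\mathbb{R}$ be a nonnegative kernel that is symmetric, i.e. $k(-z)=k(z)$ for all $z\in\mathbb{R}$. Let $\epsilon_1,\epsilon_2$ be i.i.d. real random variables with $\epsilon_1 \stackrel{d}{=} -\epsilon_1$, finite second moment, $E(k(\epsilon_1))<\infty$ and $E(|\epsilon_1|^2 k^r(\epsilon_1))<\infty$ for $r=1,2$. Let $m\in\mathbb{R}$ and $Y_i = m+\epsilon_i$, $i=1,2$. For $y\in\mathbb{R}$ put $\mu(y)=E(k(Y_2-y)Y_2)$, $\nu(y)=E(k(Y_2-y))$, assumed $>0$, and $\theta(y)=\mu(y)/\nu(y)$, so that \[ \theta(Y_1)=\frac{E_{Y_2}[k(Y_2-Y_1)Y_2]}{E_{Y_2}[k(Y_2-Y_1)]}, \] where $E_{Y_2}$ denotes integration with respect to the distribution of $Y_2$ only (with $Y_1$ held fixed). Then $\mathrm{Med}\,\theta(Y_1)=m$, and $E\,\theta(Y_1)=m$ whenever $E\,\theta(Y_1)$ exists.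
   Context: $\mathrm{Med}$ denotes the median of a random variable. $\stackrel{d}{=}$ denotes equality in distribution. *)

From HB Require Import structures.
From mathcomp Require Import all_boot all_order all_algebra.
From mathcomp Require Import all_classical all_reals all_analysis.
Set Implicit Arguments. Unset Strict Implicit. Unset Printing Implicit Defensive.
Import Order.TTheory GRing.Theory Num.Theory.
Local Open Scope classical_set_scope.
Local Open Scope ring_scope.

Section Defs.
Context {d : measure_display} {T : measurableType d} {R : realType}.
Variable P : probability T R.

Definition ident_distr (X Y : T -> R) : Prop :=
  forall A : set R, measurable A -> P (X @^-1` A) = P (Y @^-1` A).

Definition indep2 (X Y : T -> R) : Prop :=
  forall A B : set R, measurable A -> measurable B ->
    P (X @^-1` A `&` Y @^-1` B) = (P (X @^-1` A) * P (Y @^-1` B))%E.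

Definition symmetric_distr (X : T -> R) : Prop :=
  ident_distr X (fun t => - X t).

Definition mu_fun (k : R -> R) (Y : T -> R) (y : R) : \bar R :=
  'E_P[fun t => k (Y t - y) * Y t].
Definition nu_fun (k : R -> R) (Y : T -> R) (y : R) : \bar R :=
  'E_P[fun t => k (Y t - y)].
Definition theta_fun (k : R -> R) (Y : T -> R) (y : R) : R :=
  fine (mu_fun k Y y) / fine (nu_fun k Y y).

Definition is_median (X : T -> R) (c : R) : Prop :=
  ((1/2)%:E <= P [set t | (X t <= c)%R])%E /\ ((1/2)%:E <= P [set t | (c <= X t)%R])%E.
End Defs.

(** Reflection about [m] commutes with the kernel-weighted mean: since
    [Y2 - m] is symmetric and [k] is even, [θ(2m - y) = 2m - θ(y)].  Hence
    [θ(Y1) = g(ε1)] with [g(-u) = 2m - g(u)], and as [ε1] is symmetric,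
    [θ(Y1)] has the same law as [2m - θ(Y1)].  A law symmetric about [m] has
    median [m], and mean [m] whenever it has one. *)

From mathcomp Require Import all_boot all_order all_algebra.
From mathcomp Require Import all_classical all_reals all_analysis.
From mathcomp Require Import measurable_realfun.
From mathcomp Require Import ring lra.
Import Order.TTheory GRing.Theory Num.Theory.
Local Open Scope classical_set_scope.
Local Open Scope ring_scope.

Lemma invr_measurable (R : realType) : measurable_fun [set: R] GRing.inv.
Proof.
have -> : [set: R] = [set x | x != 0] `|` [set 0].
  by apply/seteqP; split => x // _; case: (eqVneq x 0) => [->|h]; [right|left].
have mD : measurable [set x : R | x != 0] by apply: open_measurable; exact: open_neq.
apply/(measurable_funU _ mD (measurable_set1 _)); split; last exact: measurable_fun_set1.
apply: open_continuous_measurable_fun; first exact: open_neq.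
by move=> x; rewrite inE /= => x0; exact: inv_continuous.
Qed.

Local Open Scope ereal_scope.

Lemma fin_num_integral_integrable {d} {T : measurableType d} {R : realType}
    {mu : {measure set T -> \bar R}} {f : T -> R} :
  measurable_fun setT f -> \int[mu]_t (f t)%:E \is a fin_num ->
  mu.-integrable setT (EFin \o f).
Proof.
move=> mf; have mEf : measurable_fun setT (EFin \o f) by exact/measurable_EFinP.
rewrite integralE fin_numB => /andP[fin_pos fin_neg].
apply/integrableP; split => //.
have -> : \int[mu]_x `|(EFin \o f) x| = \int[mu]_x ((EFin \o f)^\+ \+ (EFin \o f)^\-) x.
  by rewrite -fune_abse.
rewrite ge0_integralD //; last 2 first.
- exact: measurable_funepos.
- exact: measurable_funeneg.
by rewrite lte_add_pinfty // ltey_eq ?fin_pos ?fin_neg.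
Qed.

Lemma measurable_fun_integral_param {d1 d2} {T1 : measurableType d1}
    {T2 : measurableType d2} {R : realType}
    (mu : {sigma_finite_measure set T2 -> \bar R}) (f : T1 * T2 -> \bar R) :
  measurable_fun setT f -> measurable_fun setT (fun x => \int[mu]_y f (x, y)).
Proof.
move=> mf.
rewrite (_ : (fun x => _) = fun x => fubini_F mu f^\+ x - fubini_F mu f^\- x).
  apply: emeasurable_funB.
  - apply: measurable_fun_fubini_tonelli_F; first exact: measurable_funepos.
    exact: funepos_ge0.
  - apply: measurable_fun_fubini_tonelli_F; first exact: measurable_funeneg.
    exact: funeneg_ge0.
by apply/funext => x; rewrite integralE; congr (_ - _);
  apply: eq_integral => y _; rewrite ?funeposE ?funenegE.
Qed.

Section identical_distribution.
Context {d} {T : measurableType d} {R : realType} {P : probability T R}.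
Implicit Types X Y : T -> R.

Lemma ge0_integral_ident_distr (g : R -> \bar R) {X Y} :
  measurable_fun setT X -> measurable_fun setT Y -> ident_distr P X Y ->
  measurable_fun setT g -> (forall x, 0 <= g x) ->
  \int[P]_t g (X t) = \int[P]_t g (Y t).
Proof.
move=> mX mY XY mg g0.
have pushE Z : measurable_fun setT Z ->
    \int[P]_t g (Z t) = \int[pushforward P Z]_y g y.
  by move=> mZ; rewrite ge0_integral_pushforward.
rewrite (pushE _ mX) (pushE _ mY).
by apply: eq_measure_integral => A mA _; exact: XY.
Qed.

Lemma integral_ident_distr (h : R -> \bar R) {X Y} :
  measurable_fun setT X -> measurable_fun setT Y -> ident_distr P X Y ->
  measurable_fun setT h -> \int[P]_t h (X t) = \int[P]_t h (Y t).
Proof.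
move=> mX mY XY mh; rewrite integralE [RHS]integralE.
have posE (Z : T -> R) : (fun t => h (Z t))^\+ = h^\+ \o Z := funepos_comp h Z.
have negE (Z : T -> R) : (fun t => h (Z t))^\- = h^\- \o Z := funeneg_comp h Z.
rewrite !posE !negE.
congr (_ - _); apply: ge0_integral_ident_distr => //.
- exact: measurable_funepos.
- exact: measurable_funeneg.
Qed.

Lemma ident_distr_comp (g : R -> R) {X Y} :
  measurable_fun setT g -> ident_distr P X Y -> ident_distr P (g \o X) (g \o Y).
Proof.
move=> mg XY A mA; apply: (XY (g @^-1` A)).
by rewrite -[_ @^-1` _]setTI; exact: mg.
Qed.

Lemma symmetric_distr_ident {X Y} :
  ident_distr P X Y -> symmetric_distr P X -> symmetric_distr P Y.
Proof.
move=> XY Xsym A mA; rewrite -XY // Xsym //.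
exact: (ident_distr_comp -%R (@oppr_measurable R setT) XY A mA).
Qed.

Section symmetric_about.
Variables (Z : T -> R) (m : R).
Hypotheses (mZ : measurable_fun setT Z)
  (Zsym : ident_distr P Z (fun t => 2 * m - Z t)%R).

Lemma is_median_reflect : is_median P Z m.
Proof.
have le_m : [set t | Z t <= m]%R = Z @^-1` `]-oo, m].
  by apply/seteqP; split => t /=; rewrite in_itv.
have ge_m : [set t | m <= Z t]%R = Z @^-1` `[m, +oo[.
  by apply/seteqP; split => t /=; rewrite in_itv /= andbT.
have mle : measurable [set t | Z t <= m]%R.
  by rewrite le_m -[_ @^-1` _]setTI; exact: mZ.
have mge : measurable [set t | m <= Z t]%R.
  by rewrite ge_m -[_ @^-1` _]setTI; exact: mZ.
have Peq : P [set t | Z t <= m]%R = P [set t | m <= Z t]%R.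
  rewrite le_m Zsym //; congr (P _); apply/seteqP.
  by split => t /=; rewrite in_itv /= => ?; lra.
have cover : 1 <= P [set t | Z t <= m]%R + P [set t | m <= Z t]%R.
  rewrite -(probability_setT P).
  have -> : [set: T] = [set t | Z t <= m]%R `|` [set t | m <= Z t]%R.
    apply/seteqP; split => t // _ /=.
    by case: (lerP (Z t) m) => h; [left|right; exact: ltW].
  exact: measureU2.
have Pfin : P [set t | Z t <= m]%R \is a fin_num.
  by rewrite ge0_fin_numE // (le_lt_trans (probability_le1 P mle)) ?ltry.
rewrite /is_median -Peq; move: cover; rewrite -Peq -(fineK Pfin) -EFinD !lee_fin.
by move=> ?; split; lra.
Qed.

Lemma expectation_reflect : P.-integrable setT (EFin \o Z) -> 'E_P[Z] = m%:E.
Proof.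
move=> iZ; rewrite expectation.unlock.
have EZ_reflect : \int[P]_t (Z t)%:E = (2 * m)%:E - \int[P]_t (Z t)%:E.
  have mZ' : measurable_fun setT (fun t => 2 * m - Z t)%R.
    by apply: measurable_funB => //; exact: measurable_cst.
  rewrite {1}(integral_ident_distr EFin mZ mZ' Zsym) //.
  under eq_integral do rewrite EFinB.
  rewrite integralB_EFin //; last exact: finite_measure_integrable_cst.
  rewrite integral_cst //; congr (_ - _).
  by rewrite -[RHS]mule1; congr (_ * _); exact: probability_setT.
move: EZ_reflect; have := integrable_fin_num measurableT iZ.
set E := \int[P]_t _ => Efin; rewrite -(fineK Efin) -EFinB => -[?].
by congr _%:E; lra.
Qed.

End symmetric_about.
End identical_distribution.

Section kernel_mean_measurability.
Context d (T : measurableType d) (R : realType) (P : probability T R).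
Variables (k : R -> R) (Y : T -> R).
Hypotheses (mk : measurable_fun setT k) (mY : measurable_fun setT Y).

Let mkY : measurable_fun setT (fun p : R * T => k (Y p.2 - p.1)%R).
Proof.
apply: measurableT_comp mk _; apply: measurable_funB; last exact: measurable_fst.
exact: measurableT_comp mY measurable_snd.
Qed.

Lemma measurable_mu_fun : measurable_fun setT (mu_fun P k Y).
Proof.
rewrite /mu_fun expectation.unlock.
apply: (measurable_fun_integral_param P
  (fun p : R * T => (k (Y p.2 - p.1) * Y p.2)%:E)).
apply/measurable_EFinP; apply: measurable_funM => //.
exact: measurableT_comp mY measurable_snd.
Qed.

Lemma measurable_nu_fun : measurable_fun setT (nu_fun P k Y).
Proof.
rewrite /nu_fun expectation.unlock.
apply: (measurable_fun_integral_param P (fun p : R * T => (k (Y p.2 - p.1))%:E)).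
exact/measurable_EFinP.
Qed.

Lemma measurable_theta_fun : measurable_fun setT (theta_fun P k Y).
Proof.
apply: measurable_funM; first exact: measurableT_comp measurable_mu_fun.
apply: measurableT_comp (@invr_measurable R) _.
exact: measurableT_comp measurable_nu_fun.
Qed.

End kernel_mean_measurability.

Section kernel_mean_reflection.
Context d (T : measurableType d) (R : realType) (P : probability T R).
Variables (k : R -> R) (e : T -> R) (m : R).
Hypotheses (mk : measurable_fun setT k) (k_even : forall z, k (- z)%R = k z)
  (me : measurable_fun setT e) (e_sym : symmetric_distr P e).
Local Notation Y := (fun t => m + e t)%R.

Let mNe : measurable_fun setT (fun t => - e t)%R.
Proof. exact: measurableT_comp (@oppr_measurable R setT) me. Qed.

Let mk_shift c : measurable_fun setT (fun u => k (m + u - c)%R).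
Proof.
by apply: measurableT_comp mk _; apply: measurable_funB => //; exact: measurable_funD.
Qed.

Lemma nu_fun_reflect y : nu_fun P k Y (2 * m - y)%R = nu_fun P k Y y.
Proof.
rewrite /nu_fun expectation.unlock.
rewrite (integral_ident_distr (fun u => (k (m + u - (2 * m - y)))%:E) me mNe e_sym);
  last exact/measurable_EFinP.
by apply: eq_integral => t _; rewrite -k_even; congr (k _)%:E; ring.
Qed.

Lemma mu_fun_reflect y :
  mu_fun P k Y y \is a fin_num -> nu_fun P k Y y \is a fin_num ->
  mu_fun P k Y (2 * m - y)%R = (2 * m)%:E * nu_fun P k Y y - mu_fun P k Y y.
Proof.
rewrite /mu_fun /nu_fun expectation.unlock => mu_fin nu_fin.
have mke : measurable_fun setT (fun t => k (m + e t - y))%R.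
  exact: measurableT_comp (mk_shift y) me.
have ikY := fin_num_integral_integrable mke nu_fin.
have iYkY : P.-integrable setT (EFin \o (fun t => k (m + e t - y) * (m + e t)))%R.
  apply: fin_num_integral_integrable mu_fin.
  by apply: measurable_funM => //; exact: measurable_funD.
have ikY2m : P.-integrable setT (EFin \o (fun t => 2 * m * k (m + e t - y)))%R.
  by apply: eq_integrable (integrableZl measurableT (2 * m)%R ikY).
rewrite (integral_ident_distr
  (fun u => (k (m + u - (2 * m - y)) * (m + u))%:E) me mNe e_sym); last first.
  apply/measurable_EFinP; apply: measurable_funM; first exact: mk_shift.
  exact: measurable_funD.
rewrite -(integralZl measurableT ikY) -integralB_EFin //.
apply: eq_integral => t _; rewrite -EFinB -k_even; congr _%:E.
have -> : (- (m - e t - (2 * m - y)) = m + e t - y)%R by ring.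
by ring.
Qed.

Lemma theta_fun_reflect y :
  mu_fun P k Y y \is a fin_num -> nu_fun P k Y y \is a fin_num ->
  0 < nu_fun P k Y y ->
  theta_fun P k Y (2 * m - y)%R = (2 * m - theta_fun P k Y y)%R.
Proof.
move=> mu_fin nu_fin nu_gt0.
rewrite /theta_fun nu_fun_reflect mu_fun_reflect // fineB ?fin_numM //= fineM //=.
have : (fine (nu_fun P k Y y) != 0)%R.
  by rewrite gt_eqF // -lte_fin fineK.
by move=> ?; field.
Qed.

End kernel_mean_reflection.

Theorem theorem1 (d : measure_display) (T : measurableType d) (R : realType)
  (P : probability T R) (k : R -> R) (e1 e2 : T -> R) (m : R) :
  measurable_fun setT k ->
  (forall z, (0 <= k z)%R) ->
  (forall z, k (- z)%R = k z) ->
  measurable_fun setT e1 -> measurable_fun setT e2 ->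
  ident_distr P e1 e2 -> indep2 P e1 e2 ->
  symmetric_distr P e1 ->
  P.-integrable setT (fun t => (e1 t ^+ 2)%R%:E) ->
  'E_P[fun t => k (e1 t)] < +oo ->
  'E_P[fun t => (`|e1 t| ^+ 2 * k (e1 t))%R] < +oo ->
  'E_P[fun t => (`|e1 t| ^+ 2 * k (e1 t) ^+ 2)%R] < +oo ->
  let Y1 := fun t => (m + e1 t)%R in
  let Y2 := fun t => (m + e2 t)%R in
  (forall y, mu_fun P k Y2 y \is a fin_num) ->
  (forall y, nu_fun P k Y2 y \is a fin_num) ->
  (forall y, 0 < nu_fun P k Y2 y) ->
  is_median P (fun t => theta_fun P k Y2 (Y1 t)) m /\
  (P.-integrable setT (fun t => (theta_fun P k Y2 (Y1 t))%:E) ->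
     'E_P[fun t => theta_fun P k Y2 (Y1 t)] = m%:E).
Proof.
move=> mk _ k_even me1 me2 e12 _ e1_sym _ _ _ _ Y1 Y2 mu_fin nu_fin nu_gt0.
have e2_sym := symmetric_distr_ident e12 e1_sym.
pose g u := theta_fun P k Y2 (m + u)%R.
have mg : measurable_fun setT g.
  apply: measurableT_comp; last exact: measurable_funD.
  by apply: measurable_theta_fun => //; exact: measurable_funD.
have mZ : measurable_fun setT (g \o e1) := measurableT_comp mg me1.
have Zsym : ident_distr P (g \o e1) (fun t => 2 * m - g (e1 t))%R.
  rewrite (_ : (fun t => _) = g \o (fun t => - e1 t)%R).
    exact: ident_distr_comp.
  apply/funext => t; rewrite /= /g -theta_fun_reflect //.
  by congr theta_fun; ring.
by split; [exact: is_median_reflect | exact: expectation_reflect].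
Qed.
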